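(* Let $\alpha\in(0,\tfrac12]$, $X_A,X_B>0$, and suppose the solution function $S$ has exactly three zeros $\sigma_1^*<\sigma_2^*<\sigma_3^*$ in $(0,\infty)$. If either $\sqrt{\frac{8\alpha}{1-\alpha}}-\frac{2\alpha}{1-\alpha}\le\frac{X_B}{X_A}\le1$, or $\frac{X_B}{X_A}>1$, then there exists a pre-commitment $p\in[0,X_B]$ by player $B$ to battlefield $b=1$ such that $u_B(p)>\pi_B(\sigma_2^* )$.
   Context: Two-battlefield asymmetric setting: valuations $v_{A,1}=\alpha$, $v_{A,2}=1-\alpha$, $v_{B,1}=1-\alpha$, $v_{B,2}=\alpha$, budgets $X_A,X_B>0$. Define, for $x,y\ge0$, $L(x,y)=\frac{x}{2y}$ if $0\le x\le y$, $y>0$; $L(x,y)=1-\frac{y}{2x}$ if $x>y\ge0$; $L(0,0)=\tfrac12$. Let $c=\frac{(1-\alpha)^2}{\alpha}+\frac{\alpha^2}{1-\alpha}$, $r=X_A/X_B$, and $S:(0,\infty)\to\mathbb R$: $S(\sigma)=\sigma^2(c\sigma-r)$ on $(0,\frac{\alpha}{1-\alpha})$; $S(\sigma)=\frac{\alpha^2}{1-\alpha}(\sigma^3-r)+\alpha\sigma(1-r\sigma)$ on $[\frac{\alpha}{1-\alpha},\frac{1-\alpha}{\alpha})$; $S(\sigma)=\sigma-rc$ on $[\frac{1-\alpha}{\alpha},\infty)$. Player $B$'s equilibrium payoff for a zero $\sigma$: $\pi_B(\sigma)=1-\frac{\sigma}{2}$ if $\sigma\in(0,\frac{\alpha}{1-\alpha})$;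 $\pi_B(\sigma)=1-\alpha-\frac{\alpha\sigma}{2}+\frac{\alpha^2}{2\sigma(1-\alpha)}$ if $\sigma\in[\frac{\alpha}{1-\alpha},\frac{1-\alpha}{\alpha})$; $\pi_B(\sigma)=\frac{c}{2\sigma}$ if $\sigma\ge\frac{1-\alpha}{\alpha}$. Pre-commitment: $B$ places $p\in[0,X_B]$ on one battlefield $b\in\{1,2\}$; $u_A^{M}(p)=v_{A,b}+(1-v_{A,b})L(X_A-p,X_B-p)$ (for $p\le X_A$), $u_A^{W}(p)=(1-v_{A,b})L(X_A,X_B-p)$; $A$'s response is $\mathtt A_b(p)=\mathtt M$ if $p\le X_A$ and $u_A^M(p)>u_A^W(p)$, else $\mathtt A_b(p)=\mathtt W$ (ties go to withdrawing). $B$'s payoff is $u_B(p)=(1-v_{B,b})L(X_B-p,X_A-p)$ if $\mathtt A_b(p)=\mathtt M$ and $u_B(p)=v_{B,b}+(1-v_{B,b})L(X_B-p,X_A)$ if $\mathtt A_b(p)=\mathtt W$. *)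

From Stdlib Require Import Reals Lra.
Open Scope R_scope.

Definition L (x y : R) : R :=
  if Req_EM_T x 0 then (if Req_EM_T y 0 then 1/2 else x / (2 * y))
  else if Rle_dec x y then x / (2 * y) else 1 - y / (2 * x).

Definition cst (alpha : R) : R := (1 - alpha)^2 / alpha + alpha^2 / (1 - alpha).

Definition Sfun (alpha XA XB sigma : R) : R :=
  let r := XA / XB in
  let c := cst alpha in
  if Rlt_dec sigma (alpha / (1 - alpha)) then sigma^2 * (c * sigma - r)
  else if Rlt_dec sigma ((1 - alpha) / alpha) then
    alpha^2 / (1 - alpha) * (sigma^3 - r) + alpha * sigma * (1 - r * sigma)
  else sigma - r * c.

Definition piB (alpha sigma : R) : R :=
  if Rlt_dec sigma (alpha / (1 - alpha)) then 1 - sigma / 2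
  else if Rlt_dec sigma ((1 - alpha) / alpha) then
    1 - alpha - alpha * sigma / 2 + alpha^2 / (2 * sigma * (1 - alpha))
  else cst alpha / (2 * sigma).

Inductive bf := BF1 | BF2.

Definition vA (alpha : R) (b : bf) : R := match b with BF1 => alpha | BF2 => 1 - alpha end.
Definition vB (alpha : R) (b : bf) : R := match b with BF1 => 1 - alpha | BF2 => alpha end.

Definition uAM (alpha XA XB : R) (b : bf) (p : R) : R :=
  vA alpha b + (1 - vA alpha b) * L (XA - p) (XB - p).
Definition uAW (alpha XA XB : R) (b : bf) (p : R) : R :=
  (1 - vA alpha b) * L XA (XB - p).

(* A matches (true) iff p <= X_A and u_A^M(p) > u_A^W(p); ties go to withdrawing. *)
Definition A_matches (alpha XA XB : R) (b : bf) (p : R) : bool :=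
  if Rle_dec p XA then
    (if Rlt_dec (uAW alpha XA XB b p) (uAM alpha XA XB b p) then true else false)
  else false.

Definition uB (alpha XA XB : R) (b : bf) (p : R) : R :=
  if A_matches alpha XA XB b p then (1 - vB alpha b) * L (XB - p) (XA - p)
  else vB alpha b + (1 - vB alpha b) * L (XB - p) XA.

From Stdlib Require Import Reals Lra Psatz.
Open Scope R_scope.

(* With a = α/(1-α), on the middle branch S(σ) = 0 reads r = g(σ) with
   g(σ) = (aσ³ + σ)/(σ² + a), while on the lower branch it reads r = cσ, and
   g(a) = ca.  The lower and upper branches have at most one zero each, so the
   middle zero σ₂ lies on the middle branch with a zero σ₁ below it.  If
   σ₂² ≤ a or 3a ≥ 1, then g is strictly increasing on (0, σ₂] and exceeds
   ca on [a, σ₂], which leaves no room for σ₁.  Hence σ₂² > a, which makes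
   π_B(σ₂) < 1 - α, and 3a < 1.  On the other hand B secures 1 - α by a
   commitment that A prefers not to match: p = X_B when X_B > X_A, and
   p = (X_B + 2aX_A)/2 otherwise, where the bound on X_B/X_A is exactly what
   makes withdrawing optimal for A. *)

Definition odds (alpha : R) : R := alpha / (1 - alpha).

Lemma odds_pos alpha : 0 < alpha < 1 -> 0 < odds alpha.
Proof. intros Hal; apply Rdiv_lt_0_compat; lra. Qed.

Lemma odds_pos_le1 alpha : 0 < alpha <= 1/2 -> 0 < odds alpha <= 1.
Proof.
  intros Hal; split; [apply odds_pos; lra|].
  assert ((1 - alpha) * odds alpha = alpha) by (unfold odds; field; lra).
  nra.
Qed.

Lemma cst_pos alpha : 0 < alpha < 1 -> 0 < cst alpha.
Proof.
  intros Hal; unfold cst.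
  assert (0 < (1 - alpha)^2 / alpha) by (apply Rdiv_lt_0_compat; [apply pow_lt|]; lra).
  assert (0 < alpha^2 / (1 - alpha)) by (apply Rdiv_lt_0_compat; [apply pow_lt|]; lra).
  lra.
Qed.

Lemma cst_mul_odds alpha : 0 < alpha < 1 ->
  cst alpha * odds alpha = odds alpha ^ 2 - odds alpha + 1.
Proof. intros Hal; unfold cst, odds; field; lra. Qed.

(* [alpha * Smid (odds alpha) (XA / XB)] is the middle branch of [Sfun]. *)
Definition Smid (a r s : R) : R := a * (s^3 - r) + s * (1 - r * s).

Lemma Sfun_zero_low alpha XA XB s : 0 < s < odds alpha ->
  Sfun alpha XA XB s = 0 -> XA / XB = cst alpha * s.
Proof.
  intros Hs; unfold Sfun; fold (odds alpha).
  destruct (Rlt_dec s (odds alpha)) as [_|]; [|lra].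
  intros E; destruct (Rmult_integral _ _ E); [|lra].
  assert (0 < s^2) by (apply pow_lt; lra); lra.
Qed.

Lemma Sfun_zero_mid alpha XA XB s : 0 < alpha < 1 ->
  odds alpha <= s < (1 - alpha) / alpha ->
  Sfun alpha XA XB s = 0 -> Smid (odds alpha) (XA / XB) s = 0.
Proof.
  intros Hal Hs; unfold Sfun; fold (odds alpha).
  destruct (Rlt_dec s (odds alpha)); [lra|].
  destruct (Rlt_dec s ((1 - alpha) / alpha)) as [_|]; [|lra].
  intros E.
  assert (Hmid : alpha * Smid (odds alpha) (XA / XB) s = 0).
  { rewrite <- E; unfold Smid, odds; set (ratio := XA / XB); field; lra. }
  destruct (Rmult_integral _ _ Hmid); [lra | assumption].
Qed.

Lemma one_le_inv_odds alpha : 0 < alpha <= 1/2 -> 1 <= (1 - alpha) / alpha.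
Proof.
  intros Hal.
  assert (alpha * ((1 - alpha) / alpha) = 1 - alpha) by (field; lra).
  nra.
Qed.

Lemma Sfun_zero_high alpha XA XB s : 0 < alpha <= 1/2 -> (1 - alpha) / alpha <= s ->
  Sfun alpha XA XB s = 0 -> s = XA / XB * cst alpha.
Proof.
  intros Hal Hs; pose proof (odds_pos_le1 alpha Hal); pose proof (one_le_inv_odds alpha Hal).
  unfold Sfun; fold (odds alpha).
  destruct (Rlt_dec s (odds alpha)); [lra|].
  destruct (Rlt_dec s ((1 - alpha) / alpha)); [lra|].
  lra.
Qed.

(* [(a y^3 + y) (x^2 + a) - (a x^3 + x) (y^2 + a)] factors as [(y - x) P] with
   [P] the positive polynomial below, so [r = (a s^3 + s) / (s^2 + a)] cannot
   have two roots [x < y]. *)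
Lemma Smid_zero_unique a r x y : 0 < a -> 0 < x < y -> (y * y <= a \/ 1 <= 3 * a) ->
  Smid a r x = 0 -> Smid a r y <> 0.
Proof.
  intros Ha Hxy Hcond Hx Hy; unfold Smid in *.
  assert (HP : 0 < a * x^2 * y^2 + a^2 * (x^2 + x * y + y^2) + a - x * y).
  { destruct Hcond as [Hsq | H3].
    - assert (0 <= a * x^2 * y^2) by (apply Rmult_le_pos; [nra | apply pow2_ge_0]).
      assert (0 <= a^2 * (x^2 + x * y + y^2)) by (apply Rmult_le_pos; [apply pow2_ge_0 | nra]).
      nra.
    - assert (0 <= a * (x * y - 1)^2) by (apply Rmult_le_pos; [lra | apply pow2_ge_0]).
      assert (0 < a^2 * (y - x)^2) by (apply Rmult_lt_0_compat; [nra | apply pow_lt; lra]).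
      assert (0 <= x * y * ((3 * a - 1) * (a + 1))) by (apply Rmult_le_pos; nra).
      nra. }
  assert (Hfac : (a * y^3 + y) * (x^2 + a) - (a * x^3 + x) * (y^2 + a)
               = (y - x) * (a * x^2 * y^2 + a^2 * (x^2 + x * y + y^2) + a - x * y)) by ring.
  assert (0 < (y - x) * (a * x^2 * y^2 + a^2 * (x^2 + x * y + y^2) + a - x * y))
    by (apply Rmult_lt_0_compat; lra).
  nra.
Qed.

(* [r = a^2 - a + 1] is the value making [a] itself a root; the gap
   [a y^3 + y - (a^2 - a + 1) (y^2 + a)] factors as [(y - a) Q(y)] with [Q] positive. *)
Lemma Smid_nonzero_above a r y : 0 < a <= 1 -> a <= y -> (y * y <= a \/ 1 <= 3 * a) ->
  r < a^2 - a + 1 -> Smid a r y <> 0.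
Proof.
  intros Ha Hy Hcond Hr Hzero; unfold Smid in Hzero.
  assert (HQ : 0 < a * y^2 + (a - 1) * y + (a^2 - a + 1)).
  { destruct Hcond as [Hsq | H3].
    - assert (y <= 1) by nra.
      assert (0 <= (1 - a) * (1 - y)) by nra.
      nra.
    - assert (0 <= (2 * a * y + (a - 1))^2) by apply pow2_ge_0.
      assert (0 <= (5 * a - 1) * (1 - a)) by nra.
      nra. }
  assert (Hfac : a * y^3 + y - (a^2 - a + 1) * (y^2 + a)
               = (y - a) * (a * y^2 + (a - 1) * y + (a^2 - a + 1))) by ring.
  assert (0 <= (y - a) * (a * y^2 + (a - 1) * y + (a^2 - a + 1))) by (apply Rmult_le_pos; lra).
  assert (r * (y^2 + a) < (a^2 - a + 1) * (y^2 + a)) by (apply Rmult_lt_compat_r; nra).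
  nra.
Qed.

Lemma Smid_zero_above_zero a c r x y : 0 < a <= 1 -> c * a = a^2 - a + 1 -> 0 < c ->
  0 < x < y -> a <= y -> Smid a r y = 0 ->
  (x < a /\ r = c * x) \/ (a <= x /\ Smid a r x = 0) ->
  a < y * y /\ 3 * a < 1.
Proof.
  intros Ha Hca Hc Hxy Hay Hy Hx.
  assert (Hcond : ~ (y * y <= a \/ 1 <= 3 * a)).
  { intros Hcond; destruct Hx as [[Hxa Hr] | [_ Hx]].
    - apply (Smid_nonzero_above a r y); auto; nra.
    - exact (Smid_zero_unique a r x y (proj1 Ha) Hxy Hcond Hx Hy). }
  split; apply Rnot_le_lt; intros H; apply Hcond; auto.
Qed.

Lemma middle_zero_mid_region alpha XA XB s1 s2 s3 : 0 < alpha <= 1/2 ->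
  0 < s1 -> s1 < s2 -> s2 < s3 ->
  Sfun alpha XA XB s1 = 0 -> Sfun alpha XA XB s2 = 0 -> Sfun alpha XA XB s3 = 0 ->
  odds alpha <= s2 < (1 - alpha) / alpha.
Proof.
  intros Hal H1 H12 H23 Z1 Z2 Z3.
  pose proof (cst_pos alpha ltac:(lra)).
  split.
  - apply Rnot_lt_le; intros Hs.
    assert (XA / XB = cst alpha * s1) by (apply Sfun_zero_low; auto; lra).
    assert (XA / XB = cst alpha * s2) by (apply Sfun_zero_low; auto; lra).
    nra.
  - apply Rnot_le_lt; intros Hs.
    assert (s2 = XA / XB * cst alpha) by (apply (Sfun_zero_high alpha XA XB); auto; lra).
    assert (s3 = XA / XB * cst alpha) by (apply (Sfun_zero_high alpha XA XB); auto; lra).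
    lra.
Qed.

Lemma middle_zero_sq_gt alpha XA XB s1 s2 s3 : 0 < alpha <= 1/2 ->
  0 < s1 -> s1 < s2 -> s2 < s3 ->
  Sfun alpha XA XB s1 = 0 -> Sfun alpha XA XB s2 = 0 -> Sfun alpha XA XB s3 = 0 ->
  odds alpha < s2 * s2 /\ 3 * odds alpha < 1.
Proof.
  intros Hal H1 H12 H23 Z1 Z2 Z3.
  pose proof (middle_zero_mid_region alpha XA XB s1 s2 s3 Hal H1 H12 H23 Z1 Z2 Z3) as Hs2.
  apply (Smid_zero_above_zero (odds alpha) (cst alpha) (XA / XB) s1 s2).
  - apply odds_pos_le1; exact Hal.
  - apply cst_mul_odds; lra.
  - apply cst_pos; lra.
  - lra.
  - lra.
  - apply Sfun_zero_mid; auto; lra.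
  - destruct (Rlt_le_dec s1 (odds alpha)) as [Hlow | Hmid].
    + left; split; [exact Hlow|]; apply Sfun_zero_low; auto.
    + right; split; [exact Hmid|]; apply Sfun_zero_mid; auto; lra.
Qed.

Lemma piB_mid_lt alpha s : 0 < alpha < 1 ->
  odds alpha <= s < (1 - alpha) / alpha -> odds alpha < s * s -> piB alpha s < 1 - alpha.
Proof.
  intros Hal Hs Hsq; unfold piB; fold (odds alpha).
  destruct (Rlt_dec s (odds alpha)); [lra|].
  destruct (Rlt_dec s ((1 - alpha) / alpha)); [|lra].
  assert (Hs0 : 0 < s) by (pose proof (odds_pos alpha Hal); lra).
  assert (Hsplit : alpha^2 / (2 * s * (1 - alpha))
                   = alpha * s / 2 - alpha * (s * s - odds alpha) / (2 * s))
    by (unfold odds; field; lra).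
  assert (0 < alpha * (s * s - odds alpha) / (2 * s))
    by (apply Rdiv_lt_0_compat; [apply Rmult_lt_0_compat|]; lra).
  lra.
Qed.

Lemma L_nonneg x y : 0 <= x -> 0 < y -> 0 <= L x y.
Proof.
  intros Hx Hy; unfold L.
  destruct (Req_EM_T x 0); destruct (Req_EM_T y 0); try lra.
  - apply Rmult_le_pos; [lra | left; apply Rinv_0_lt_compat; lra].
  - destruct (Rle_dec x y).
    + apply Rmult_le_pos; [lra | left; apply Rinv_0_lt_compat; lra].
    + assert (y / (2 * x) * (2 * x) = y) by (field; lra).
      assert (0 < y / (2 * x)) by (apply Rdiv_lt_0_compat; lra).
      nra.
Qed.

Lemma L_ge x y : 0 < x -> 0 <= y <= x -> L x y = 1 - y / (2 * x).
Proof.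
  intros Hx Hy; unfold L.
  destruct (Req_EM_T x 0); [lra|].
  destruct (Rle_dec x y); [|reflexivity].
  replace y with x by lra; field; lra.
Qed.

Lemma A_withdraws_of_gt alpha XA XB b p : XA < p -> A_matches alpha XA XB b p = false.
Proof. intros Hp; unfold A_matches; destruct (Rle_dec p XA); [lra | reflexivity]. Qed.

Lemma A_withdraws_BF1 alpha XA XB p : 0 <= alpha < 1 -> 0 <= p ->
  0 <= XB - p <= XA - p -> 0 < XA - p ->
  odds alpha * (2 * (XA - p) * XA) <= (XB - p) * p ->
  A_matches alpha XA XB BF1 p = false.
Proof.
  intros Hal Hp Hy Hx Hcond; unfold A_matches.
  destruct (Rle_dec p XA); [|reflexivity].
  destruct (Rlt_dec (uAW alpha XA XB BF1 p) (uAM alpha XA XB BF1 p)) as [Hlt|]; [|reflexivity].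
  exfalso; revert Hlt; unfold uAW, uAM, vA.
  rewrite (L_ge (XA - p) (XB - p)), (L_ge XA (XB - p)) by lra.
  assert (Hgain : (1 - alpha) * ((XB - p) / (2 * (XA - p)) - (XB - p) / (2 * XA)) - alpha
                  = (1 - alpha) * ((XB - p) * p - odds alpha * (2 * (XA - p) * XA))
                    / (2 * (XA - p) * XA))
    by (unfold odds; field; lra).
  assert (0 <= (1 - alpha) * ((XB - p) * p - odds alpha * (2 * (XA - p) * XA))
               / (2 * (XA - p) * XA)).
  { apply Rmult_le_pos; [apply Rmult_le_pos; lra|].
    left; apply Rinv_0_lt_compat; nra. }
  lra.
Qed.

Lemma uB_BF1_of_withdraw alpha XA XB p : 0 <= alpha -> 0 < XA -> p <= XB ->
  A_matches alpha XA XB BF1 p = false -> 1 - alpha <= uB alpha XA XB BF1 p.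
Proof.
  intros Hal HA Hp Hw; unfold uB; rewrite Hw; unfold vB.
  assert (0 <= L (XB - p) XA) by (apply L_nonneg; lra).
  nra.
Qed.

Lemma sqrt_bound_sq a t : 0 <= a <= 1/2 -> sqrt (8 * a) - 2 * a <= t ->
  2 * a <= t /\ 8 * a <= (t + 2 * a)^2.
Proof.
  intros Ha Ht.
  assert (Hsq : sqrt (8 * a) * sqrt (8 * a) = 8 * a) by (apply sqrt_sqrt; lra).
  pose proof (sqrt_pos (8 * a)).
  assert (4 * a <= sqrt (8 * a)) by nra.
  split; nra.
Qed.

Lemma commitment_BF1_budget_le alpha XA XB : 0 < alpha <= 1/2 -> 0 < XA ->
  3 * odds alpha < 1 ->
  sqrt (8 * odds alpha) - 2 * odds alpha <= XB / XA <= 1 ->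
  1 - alpha <= uB alpha XA XB BF1 ((XB + 2 * odds alpha * XA) / 2).
Proof.
  intros Hal HA H3 [Hlo Hhi].
  set (a := odds alpha) in *; set (t := XB / XA) in *.
  pose proof (odds_pos_le1 alpha Hal) as Ha; fold a in Ha.
  destruct (sqrt_bound_sq a t ltac:(lra) Hlo) as [Ht Hq].
  assert (HXB : XB = t * XA) by (unfold t; field; lra).
  apply uB_BF1_of_withdraw; [lra | lra | nra |].
  assert (Hgap : (t * XA - (t * XA + 2 * a * XA) / 2) * ((t * XA + 2 * a * XA) / 2)
                 - a * (2 * (XA - (t * XA + 2 * a * XA) / 2) * XA)
                 = XA^2 / 4 * ((t + 2 * a)^2 - 8 * a)) by field.
  assert (0 <= XA^2 / 4 * ((t + 2 * a)^2 - 8 * a))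
    by (apply Rmult_le_pos; [pose proof (pow2_ge_0 XA) |]; lra).
  apply A_withdraws_BF1; fold a; rewrite ?HXB; try split; try lra; nra.
Qed.

Lemma commitment_BF1 alpha XA XB : 0 < alpha <= 1/2 -> 0 < XA -> 0 < XB ->
  3 * odds alpha < 1 ->
  (sqrt (8 * alpha / (1 - alpha)) - 2 * alpha / (1 - alpha) <= XB / XA /\ XB / XA <= 1)
  \/ XB / XA > 1 ->
  exists p, 0 <= p <= XB /\ 1 - alpha <= uB alpha XA XB BF1 p.
Proof.
  intros Hal HA HB H3 [Hle | Hgt].
  - pose proof (odds_pos_le1 alpha Hal) as Ha.
    assert (E8 : 8 * alpha / (1 - alpha) = 8 * odds alpha) by (unfold odds; field; lra).
    assert (E2 : 2 * alpha / (1 - alpha) = 2 * odds alpha) by (unfold odds; field; lra).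
    rewrite E8, E2 in Hle.
    destruct (sqrt_bound_sq (odds alpha) (XB / XA) ltac:(lra) (proj1 Hle)) as [Ht _].
    assert (HXB : XB = XB / XA * XA) by (field; lra).
    exists ((XB + 2 * odds alpha * XA) / 2); split.
    + split; nra.
    + apply commitment_BF1_budget_le; assumption.
  - assert (HXB : XB = XB / XA * XA) by (field; lra).
    assert (XA < XB) by nra.
    exists XB; split; [lra|].
    apply uB_BF1_of_withdraw; [lra | lra | lra |].
    apply A_withdraws_of_gt; lra.
Qed.

Theorem theorem2 (alpha XA XB s1 s2 s3 : R) :
  0 < alpha <= 1/2 -> 0 < XA -> 0 < XB ->
  0 < s1 -> s1 < s2 -> s2 < s3 ->
  Sfun alpha XA XB s1 = 0 -> Sfun alpha XA XB s2 = 0 -> Sfun alpha XA XB s3 = 0 ->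
  (forall s, 0 < s -> Sfun alpha XA XB s = 0 -> s = s1 \/ s = s2 \/ s = s3) ->
  ((sqrt (8 * alpha / (1 - alpha)) - 2 * alpha / (1 - alpha) <= XB / XA /\ XB / XA <= 1)
   \/ XB / XA > 1) ->
  exists p, 0 <= p <= XB /\ uB alpha XA XB BF1 p > piB alpha s2.
Proof.
  (* Three distinct zeros suffice. *)
  intros Hal HA HB H1 H12 H23 Z1 Z2 Z3 _ Hbudget.
  destruct (middle_zero_sq_gt alpha XA XB s1 s2 s3 Hal H1 H12 H23 Z1 Z2 Z3) as [Hsq H3].
  assert (HpiB : piB alpha s2 < 1 - alpha).
  { apply piB_mid_lt; [lra | | exact Hsq].
    exact (middle_zero_mid_region alpha XA XB s1 s2 s3 Hal H1 H12 H23 Z1 Z2 Z3). }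
  destruct (commitment_BF1 alpha XA XB Hal HA HB H3 Hbudget) as [p [Hp HuB]].
  exists p; split; [exact Hp | lra].
Qed.
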